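(* Let $\mathcal{C}$ be a self-dual CSS code on $n$ qubits (i.e., its $X$-type and $Z$-type stabilizer groups are $\{X_S : S\in\mathcal{S}\}$ and $\{Z_S : S \in \mathcal{S}\}$ for the same family $\mathcal S$ of subsets of $\{1,\dots,n\}$). Let $\sigma$ be a permutation of $\{1,\dots,n\}$ such that permuting the qubits by $\sigma$ maps the code space to itself. Let $U = \prod_{i:\, \sigma(i)\neq i} \mathrm{CZ}_{i,\sigma(i)}$ (one $\mathrm{CZ}$ gate for each such $i$, so that for a $2$-cycle $(i,j)$ of $\sigma$ the two gates $\mathrm{CZ}_{i,j}$ and $\mathrm{CZ}_{j,i}$ both appear). Then there is a Pauli operator $P$ that is a product of $Z$ operators such that $PU$ maps the code space to itself.
   Context: $\mathrm{CZ}_{a,b} = \mathbb 1 - 2|11\rangle\langle 11|$ on qubits $a,b$; it is symmetric in $a,b$. $X_S = \prod_{i\in S} X_i$, $Z_S = \prod_{i\in S}Z_i$. *)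

From HB Require Import structures.
From mathcomp Require Import all_boot all_order all_algebra all_fingroup all_field.
Set Implicit Arguments. Unset Strict Implicit. Unset Printing Implicit Defensive.
Import Order.TTheory GRing.Theory Num.Theory.
Local Open Scope ring_scope.

Definition bits (n : nat) := {ffun 'I_n -> bool}.
Definition state (n : nat) := bits n -> algC.

(* X_S : |x> |-> |x xor 1_S> *)
Definition flip n (S : {set 'I_n}) (x : bits n) : bits n :=
  [ffun i => x i (+) (i \in S)].
Definition Xop n (S : {set 'I_n}) (v : state n) : state n :=
  fun x => v (flip S x).
Definition Zop n (S : {set 'I_n}) (v : state n) : state n :=
  fun x => (-1) ^+ #|[set i in S | x i]| * v x.
Definition CZ n (a b : 'I_n) (v : state n) : state n :=
  fun x => (if x a && x b then -1 else 1) * v x.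
(* qubit permutation: the content of qubit i is moved to qubit sigma i,
   i.e. |x> |-> |y> with y_(sigma i) = x_i *)
Definition permop n (s : {perm 'I_n}) (v : state n) : state n :=
  fun y => v [ffun i => y (s i)].
(* U = prod_{i : sigma i <> i} CZ_{i, sigma i}  (all factors commute) *)
Definition Ucz n (s : {perm 'I_n}) : state n -> state n :=
  foldr (fun i f v => CZ i (s i) (f v)) id [seq i <- enum 'I_n | s i != i].

(* self-dual CSS code: X- and Z-stabilizer groups {X_S | S in calS},
   {Z_S | S in calS}; calS is a group under symmetric difference and
   the stabilizers commute (|S :&: T| even). *)
Definition selfdual_css n (calS : {set {set 'I_n}}) : Prop :=
  [/\ set0 \in calS,
      forall S T, S \in calS -> T \in calS -> (S :\: T) :|: (T :\: S) \in calS
    & forall S T, S \in calS -> T \in calS -> ~~ odd #|S :&: T| ].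

Definition in_code n (calS : {set {set 'I_n}}) (v : state n) : Prop :=
  forall S, S \in calS -> Xop S v =1 v /\ Zop S v =1 v.

Definition preserves_code n (calS : {set {set 'I_n}}) (A : state n -> state n) : Prop :=
  forall v, in_code calS v -> in_code calS (A v).

(* On the computational basis, [Z_F U] with [F] the fixed points of [sigma]
   is the diagonal phase [f x = prod_i (-1)^(x_i x_(sigma i))]: the fixed
   points supply the missing factors [x_i = x_i x_i].  A diagonal operator
   commutes with the Z-stabilizers, and flipping [x] by a stabilizer support
   [S] multiplies [f x] by the Z-parities of [x] on [sigma^-1 S] and on
   [sigma S], and by [(-1)^|S :&: sigma^-1 S|].  Permutation invariance of the
   code puts [sigma^-1 S] and [sigma S] in the family, so the first two signs
   are [1] on the support of every code state, and the third is [1] because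
   the code is self-dual. *)
From HB Require Import structures.
From mathcomp Require Import all_boot all_order all_algebra all_fingroup all_field.
Set Implicit Arguments. Unset Strict Implicit. Unset Printing Implicit Defensive.
Import Order.TTheory GRing.Theory Num.Theory.
Local Open Scope ring_scope.

Definition signb (b : bool) : algC := if b then -1 else 1.

Lemma signb_addb_and a p b q :
  signb ((a (+) p) && (b (+) q)) =
  signb (a && b) * signb (a && q) * signb (p && b) * signb (p && q).
Proof.
by case: a; case: p; case: b; case: q; rewrite /signb /= ?mulr1 ?mul1r ?mulN1r ?mulrN1 ?opprK.
Qed.

Section Parity.

Variable n : nat.
Implicit Types (A S : {set 'I_n}) (x : bits n) (s : {perm 'I_n}).

Definition parity A x : algC := (-1) ^+ #|[set i in A | x i]|.

Lemma prod_signb_card A (g : 'I_n -> bool) :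
  \prod_i signb ((i \in A) && g i) = (-1) ^+ #|[set i in A | g i]|.
Proof.
rewrite -prodr_const [RHS]big_mkcond /=; apply: eq_bigr => i _.
by rewrite inE /signb; case: (_ && _).
Qed.

Lemma sign_card_even A : ~~ odd #|A| -> ((-1) ^+ #|A| : algC) = 1.
Proof. by move=> even_A; rewrite -signr_odd (negbTE even_A). Qed.

Definition cz_phase s x : algC := \prod_i signb (x i && x (s i)).

Lemma Zop_fixed_Ucz s (v : state n) x :
  Zop [set i | s i == i] (Ucz s v) x = cz_phase s x * v x.
Proof.
have foldE (l : seq 'I_n) :
    foldr (fun i f v => CZ i (s i) (f v)) id l v x =
    \prod_(i <- l) signb (x i && x (s i)) * v x.
  elim: l => [|i l IHl] /=; first by rewrite big_nil mul1r.
  by rewrite big_cons /CZ IHl mulrA.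
rewrite /Zop /Ucz foldE big_filter mulrA /cz_phase; congr (_ * _).
rewrite [RHS](bigID (fun i => s i == i)) /= -prod_signb_card big_enum_cond /=.
congr (_ * _); rewrite [RHS]big_mkcond /=; apply: eq_bigr => i _; rewrite inE.
by case: eqP => [->|]; rewrite ?andbb.
Qed.

Lemma cz_phase_flip s S x :
  cz_phase s (flip S x) =
  cz_phase s x * parity (s @^-1: S) x * parity ((s^-1)%g @^-1: S) x
    * (-1) ^+ #|S :&: s @^-1: S|.
Proof.
rewrite /cz_phase.
under eq_bigr do rewrite !ffunE signb_addb_and.
rewrite !big_split /= -!mulrA; congr (_ * _); congr (_ * _).
  by rewrite /parity -prod_signb_card; apply: eq_bigr => i _; rewrite inE andbC.
congr (_ * _).
  rewrite /parity -prod_signb_card (reindex_inj (@perm_inj _ s^-1)) /=.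
  by apply: eq_bigr => i _; rewrite inE permKV.
have -> : S :&: s @^-1: S = [set i in S | s i \in S].
  by apply/setP => i; rewrite !inE.
by rewrite -prod_signb_card.
Qed.

End Parity.

Section SelfDualCode.

Variables (n : nat) (calS : {set {set 'I_n}}).
Hypothesis css : selfdual_css calS.

Definition symdiff (A B : {set 'I_n}) := (A :\: B) :|: (B :\: A).

Lemma symdiff_in_code Y S :
  S \in calS -> (symdiff Y S \in calS) = (Y \in calS).
Proof.
case: css => _ symdiff_closed _ S_in.
apply/idP/idP => Y_in; last exact: symdiff_closed.
have <- : symdiff (symdiff Y S) S = Y.
  by apply/setP => i; rewrite !inE; case: (i \in Y); case: (i \in S).
exact: symdiff_closed.
Qed.

(* The unnormalized uniform superposition of the basis states [|1_Y>], [Y] in [calS]. *)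
Definition code_indicator : state n :=
  fun y => if [set i | y i] \in calS then 1 else 0.

Lemma in_code_indicator : in_code calS code_indicator.
Proof.
case: css => _ _ self_orth S S_in; split => y; rewrite /code_indicator.
  rewrite /Xop; have -> : [set i | flip S y i] = symdiff [set i | y i] S.
    by apply/setP => i; rewrite !inE ffunE; case: (y i); case: (i \in S).
  by rewrite symdiff_in_code.
rewrite /Zop; case: ifP => Y_in; last by rewrite mulr0.
rewrite mulr1 -[RHS](sign_card_even (self_orth _ _ S_in Y_in)).
by congr (_ ^+ #|pred_of_set _|); apply/setP => i; rewrite !inE.
Qed.

Lemma eq_in_code (v w : state n) : v =1 w -> in_code calS v -> in_code calS w.
Proof.
move=> eq_vw v_code S S_in; have [X_v Z_v] := v_code S S_in.
by split=> y; rewrite /Xop /Zop -!eq_vw; [exact: X_v | exact: Z_v].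
Qed.

Lemma in_code_parity (v : state n) A y :
  in_code calS v -> A \in calS -> v y != 0 -> parity A y = 1.
Proof.
move=> v_code A_in vy_neq0; apply: (mulIf vy_neq0); rewrite mul1r.
exact: ((v_code A A_in).2 y).
Qed.

Lemma diag_preserves_code (f : bits n -> algC) :
  (forall S y, S \in calS -> (forall A, A \in calS -> parity A y = 1) ->
     f (flip S y) = f y) ->
  preserves_code calS (fun v y => f y * v y).
Proof.
move=> f_flip v v_code S S_in; have [X_v Z_v] := v_code S S_in.
split => y; last by rewrite /Zop mulrCA; congr (_ * _); exact: Z_v.
have -> : Xop S (fun y => f y * v y) y = f (flip S y) * v y.
  by rewrite /Xop; congr (_ * _); exact: X_v.
have [->|vy_neq0] := eqVneq (v y) 0; first by rewrite !mulr0.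
by rewrite f_flip // => A A_in; exact: in_code_parity vy_neq0.
Qed.

Section Automorphism.

Variable s : {perm 'I_n}.
Hypothesis s_code : preserves_code calS (permop s).

(* The permuted indicator state is a code state, and its invariance under
   [X_S] at the all-zero string says that [s @^-1: S] lies in [calS]. *)
Lemma preimset_perm_in_code S : S \in calS -> s @^-1: S \in calS.
Proof.
move=> S_in; have [X_v _] := s_code in_code_indicator S_in.
have := X_v [ffun _ => false]; rewrite /Xop /permop /code_indicator.
have -> : [set i | [ffun j => flip S [ffun=> false] (s j)] i] = s @^-1: S.
  by apply/setP => i; rewrite !inE !ffunE.
have -> : [set i | [ffun j => ([ffun=> false] : bits n) (s j)] i] = set0.
  by apply/setP => i; rewrite !inE !ffunE.
by case: css => -> _ _; case: ifP => // _ /eqP; rewrite eq_sym oner_eq0.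
Qed.

(* Preimage under [s] maps [calS] injectively into the finite set [calS],
   hence onto it. *)
Lemma preimset_permV_in_code S : S \in calS -> (s^-1)%g @^-1: S \in calS.
Proof.
have preim_inj : injective (fun P : {set 'I_n} => s @^-1: P).
  move=> P Q /setP eqPQ; apply/setP => j.
  by have := eqPQ (s^-1 j)%g; rewrite !inE permKV.
have preim_onto : [set s @^-1: P | P : {set 'I_n} in calS] = calS.
  apply/eqP; rewrite eqEcard card_imset // leqnn andbT.
  by apply/subsetP => _ /imsetP [P P_in ->]; exact: preimset_perm_in_code.
rewrite -{1}preim_onto => /imsetP [P P_in ->].
by congr (_ \in calS): P_in; apply/setP => i; rewrite !inE permKV.
Qed.

Lemma cz_phase_flip_code S y :
  S \in calS -> (forall A, A \in calS -> parity A y = 1) ->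
  cz_phase s (flip S y) = cz_phase s y.
Proof.
case: css => _ _ self_orth S_in parity_y.
rewrite cz_phase_flip !parity_y ?preimset_perm_in_code ?preimset_permV_in_code //.
by rewrite sign_card_even ?self_orth ?preimset_perm_in_code // !mulr1.
Qed.

End Automorphism.

End SelfDualCode.

Theorem claim2 (n : nat) (calS : {set {set 'I_n}}) (s : {perm 'I_n}) :
  selfdual_css calS ->
  preserves_code calS (permop s) ->
  exists T : {set 'I_n}, preserves_code calS (fun v => Zop T (Ucz s v)).
Proof.
move=> css s_code; exists [set i | s i == i] => v v_code.
apply: (eq_in_code (v := fun y => cz_phase s y * v y)).
  by move=> y; rewrite Zop_fixed_Ucz.
apply: (diag_preserves_code (f := cz_phase s)) v_code => S y.
exact: cz_phase_flip_code.
Qed.
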